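(* For every integer $k\ge 0$, $$\sum_{i=1}^{2^{k}}B_i(t)=\frac{1}{2}\bigl((t+2)^{k}+t^{k}\bigr).$$
   Context: The Stern polynomials $B_n(t)\in\mathbb{Z}[t]$, $n\ge 0$, are defined by $B_0(t)=0$, $B_1(t)=1$, $B_{2n}(t)=tB_n(t)$ and $B_{2n+1}(t)=B_n(t)+B_{n+1}(t)$ for $n\ge 1$. *)

From mathcomp Require Import all_boot all_order all_algebra.
Set Implicit Arguments. Unset Strict Implicit. Unset Printing Implicit Defensive.
Import GRing.Theory.
Local Open Scope ring_scope.

(* Stern polynomials B_n(t) in Z[t]:  B_0 = 0, B_1 = 1, B_{2n} = t B_n,
   B_{2n+1} = B_n + B_{n+1}  (n >= 1).  Defined by structural recursion
   on a fuel argument (fuel n suffices since the recursive calls are on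
   indices <= (n+1)/2 < n for n >= 2). *)
Fixpoint stern_fuel (fuel : nat) (n : nat) : {poly int} :=
  match fuel with
  | 0%N => 0
  | fuel'.+1 =>
    match n with
    | 0%N => 0
    | 1%N => 1
    | _ => if odd n then stern_fuel fuel' n./2 + stern_fuel fuel' (n./2).+1
           else 'X * stern_fuel fuel' n./2
    end
  end.

Definition stern (n : nat) : {poly int} := stern_fuel n.+1 n.

Lemma stern0 : stern 0 = 0. Proof. by []. Qed.
Lemma stern1 : stern 1 = 1. Proof. by []. Qed.

From mathcomp Require Import all_boot all_order all_algebra zify ring.
Import GRing.Theory.
Local Open Scope ring_scope.

(* Splitting [0, 2^(k+1)) into even and odd indices and applying the
   defining recurrences, the partial sums s_k = B_0 + ... + B_(2^k - 1)
   satisfy s_(k+1) = (t + 2) s_k + t^k: the odd-index terms B_i + B_(i+1)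
   count every B_i twice, except that B_(2^k) = t^k takes the place of
   B_0 = 0.  Hence 2 s_k = (t + 2)^k - t^k, and the stated sum is s_k + t^k.
   Over Z[t] this is an identity for twice the sum; it is divided by 2 only
   after mapping to Q[t]. *)

Lemma stern_fuel_irrelevant f g n :
  (n < f)%N -> (n < g)%N -> stern_fuel f n = stern_fuel g n.
Proof.
elim: f g n => [|f IH] [|g] n //= ltnf ltng.
case: n ltnf ltng => [|[|n]] // ltnf ltng.
by case: ifP => odd_n; rewrite (IH g) ?(IH g (_./2.+1)) //; lia.
Qed.

Lemma stern_fuelE f n : (n < f)%N -> stern_fuel f n = stern n.
Proof. by move=> ltnf; apply: stern_fuel_irrelevant. Qed.

Lemma stern_fuelS f n : (1 < n)%N -> stern_fuel f.+1 n =
  if odd n then stern_fuel f n./2 + stern_fuel f n./2.+1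
  else 'X * stern_fuel f n./2.
Proof. by case: n => [|[|n]]. Qed.

Lemma stern_double n : stern n.*2 = 'X * stern n.
Proof.
case: n => [|n]; first by rewrite mulr0.
rewrite [LHS]stern_fuelS; last lia.
by rewrite odd_double doubleK stern_fuelE //; lia.
Qed.

Lemma stern_doubleS n : stern n.*2.+1 = stern n + stern n.+1.
Proof.
case: n => [|n]; first by rewrite add0r.
rewrite [LHS]stern_fuelS; last lia.
by rewrite oddS odd_double (half_bit_double _ true) !stern_fuelE //; lia.
Qed.

Lemma stern_exp2 k : stern (2 ^ k) = 'X ^+ k.
Proof. by elim: k => [|k IHk] //; rewrite expnS mul2n stern_double IHk exprS. Qed.

Lemma sum_nat_double (V : nmodType) (F : nat -> V) m :
  \sum_(0 <= i < m.*2) F i = \sum_(0 <= i < m) (F i.*2 + F i.*2.+1).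
Proof.
elim: m => [|m IHm]; first by rewrite !big_geq.
by rewrite doubleS !big_nat_recr //= IHm addrA.
Qed.

Lemma sum_stern_shift m :
  \sum_(0 <= i < m) stern i.+1 = \sum_(0 <= i < m) stern i + stern m.
Proof. by rewrite -big_nat_recr //= big_nat_recl // stern0 add0r. Qed.

Lemma sum_stern_exp2S k :
  \sum_(0 <= i < 2 ^ k.+1) stern i
    = ('X + 2%:P) * \sum_(0 <= i < 2 ^ k) stern i + 'X ^+ k.
Proof.
rewrite expnS mul2n sum_nat_double.
under eq_bigr => i _ do rewrite stern_double stern_doubleS.
rewrite !big_split /= sum_stern_shift stern_exp2 -mulr_sumr.
by rewrite mulrDl polyC_natr mulr_natl mulr2n !addrA.
Qed.

Lemma sum_stern_exp2 k :
  (\sum_(0 <= i < 2 ^ k) stern i) *+ 2 = ('X + 2%:P) ^+ k - 'X ^+ k.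
Proof.
elim: k => [|k IHk]; first by rewrite big_nat1 mul0rn !expr0 subrr.
by rewrite sum_stern_exp2S mulrnDl -mulrnAr IHk !exprS polyC_natr; ring.
Qed.

Lemma sum_stern_1_exp2 k :
  (\sum_(1 <= i < (2 ^ k).+1) stern i) *+ 2 = ('X + 2%:P) ^+ k + 'X ^+ k.
Proof.
rewrite big_add1 /= sum_stern_shift stern_exp2 mulrnDl sum_stern_exp2.
by rewrite mulr2n addrA subrK.
Qed.

Theorem corollary3p3 (k : nat) :
  (\sum_(1 <= i < (2 ^ k).+1) map_poly intr (stern i) : {poly rat})
  = (2%:R^-1 : rat) *: (('X + 2%:P) ^+ k + 'X ^+ k).
Proof.
have := congr1 (map_poly (intr : int -> rat)) (sum_stern_1_exp2 k).
rewrite rmorphMn rmorph_sum rmorphD !rmorphXn rmorphD /=.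
rewrite !map_polyX map_polyC rmorph_nat => twice_sum.
by rewrite -twice_sum -scalerMnr scalerMnl -mulr_natr mulVf ?scale1r // pnatr_eq0.
Qed.
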